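(* Let $t\in\mathbb{N}$ and let $H$ be a graph with vertex set $A\cup T$ such that: (1) $|A|\ge 3t^2+t+1$; (2) $A$ is a clique in $H$; (3) $T=V(Q_1)\cup V(Q_2)\cup V(Q_3)$, where $Q_1,Q_2,Q_3$ are paths in $H$, each starting at a common vertex $w\notin A$ and ending in $A$, such that $Q_1-w$, $Q_2-w$, $Q_3-w$ are pairwise vertex-disjoint; (4) $\deg_H(w)=3$; (5) $|A\cap T|=3$, and the three vertices of $A\cap T$ are the endpoints $y_1,y_2,y_3$ of $Q_1,Q_2,Q_3$ different from $w$; (6) $H[V(Q_1)\cup V(Q_2)]$ is a chordless cycle; (7) $A\setminus T$ and $T\setminus A$ are anticomplete to each other. Then $H\xrightarrow{\cap} tS_{t,t,t}$.
   Context: All graphs are finite and simple. For graphs $G_1=(V_1,E_1)$, $G_2=(V_2,E_2)$, $G_1\cap G_2=(V_1\cap V_2, E_1\cap E_2)$. For a graph $G=(V,E)$ and an injective map $\alpha$ on $V$, $G^{\alpha}$ has vertex set $\alpha(V)$ and edge set $\{\{\alpha(v),\alpha(w)\}: \{v,w\}\in E\}$. We write $G\xrightarrow{\cap} H$ if $H$ is (isomorphic to) $G^{\alpha_1}\cap\cdots\cap G^{\alpha_k}$ for some $k\ge1$ and injective maps $\alpha_1,\dots,\alpha_k$ on $V(G)$. For integers $a,b,c\ge1$, $S_{a,b,c}$ is the tree consisting of a vertex of degree $3$ together with three pendant paths having $a$, $b$, $c$ edges respectively; $tS_{t,t,t}$ is the disjoint union of $t$ copies of $S_{t,t,t}$.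 Sets are anticomplete if no edge joins them. *)

From mathcomp Require Import all_boot.
Set Implicit Arguments. Unset Strict Implicit. Unset Printing Implicit Defensive.

Definition simple_graph (V : finType) (e : rel V) : Prop :=
  symmetric e /\ irreflexive e.

(* Vertex set and edge set of G^{al_1} ∩ ... ∩ G^{al_k}, the maps al_i : V -> nat
   being injective (all images living in the common universe nat). *)
Definition inter_vertex (V : finType) (k : nat) (al : 'I_k -> V -> nat) (x : nat) : Prop :=
  forall i, exists v, al i v = x.

Definition inter_edge (V : finType) (e : rel V) (k : nat) (al : 'I_k -> V -> nat)
  (x y : nat) : Prop :=
  forall i, exists v w, [/\ al i v = x, al i w = y & e v w].

Definition inter_iso (V : finType) (e : rel V) (k : nat) (al : 'I_k -> V -> nat)
  (W : finType) (eH : rel W) : Prop :=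
  exists f : W -> nat,
    [/\ injective f,
        (forall x, inter_vertex al x <-> exists u, f u = x) &
        (forall u v, inter_edge e al (f u) (f v) <-> eH u v)].

Definition inter_to (V : finType) (e : rel V) (W : finType) (eH : rel W) : Prop :=
  exists k, 0 < k /\
    exists al : 'I_k -> V -> nat, (forall i, injective (al i)) /\ inter_iso e al eH.

(* t S_{t,t,t}: vertices (c, None) = centre of copy c, (c, Some (j, m)) = vertex at
   distance m+1 from the centre on leg j of copy c. *)
Definition tS_vertex (t : nat) : finType := ('I_t * option ('I_3 * 'I_t))%type.

Definition spider_adj (t : nat) (p q : option ('I_3 * 'I_t)) : bool :=
  match p, q with
  | None, None => false
  | None, Some (_, m) => (m : nat) == 0
  | Some (_, m), None => (m : nat) == 0
  | Some (j, m), Some (j', m') => (j == j') && (((m : nat).+1 == m') || ((m' : nat).+1 == m))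
  end.

Definition tS_rel (t : nat) : rel (tS_vertex t) :=
  fun u v => (u.1 == v.1) && spider_adj u.2 v.2.

Definition induces_chordless_cycle (V : finType) (e : rel V) (S : {set V}) : Prop :=
  exists c : seq V,
    [/\ uniq c, [set x in c] = S, 3 <= size c &
        forall x y, x \in S -> y \in S -> e x y = (y == next c x) || (x == next c y)].

Definition is_path_from (V : finType) (e : rel V) (w : V) (q : seq V) : Prop :=
  path e w q /\ uniq (w :: q).
Arguments tS_rel t : clear implicits.

From mathcomp Require Import all_boot zify.
Set Implicit Arguments. Unset Strict Implicit. Unset Printing Implicit Defensive.

(* For each vertex z of t S_{t,t,t} we build an injective homomorphism into H
   that sends z into T \ A.  A piece around z is mapped onto paths inside T:
   the spider of a centre onto Q1, Q2, Q3, a stretch of a leg onto the path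
   y2 ... w ... y1 formed by Q2 and Q1; every edge leaving the piece starts at a
   vertex sent into A.  The other vertices go injectively into A \ T, which has
   room for them since |A \ T| >= 3t^2 + t - 2 and every piece has at least two
   vertices, and all edges among them are present because A is a clique.  Of two
   distinct non-adjacent vertices, one has the other outside its piece, and its
   homomorphism sends them into the anticomplete sets T \ A and A \ T.  Copies
   of H relabelled along these homomorphisms intersect in exactly t S_{t,t,t}. *)

Section IntersectionOfEmbeddings.
Variables (V W : finType) (e : rel V) (eW : rel W) (Phi : W -> W -> V).
Hypothesis e_irr : irreflexive e.
Hypothesis Phi_inj : forall z, injective (Phi z).
Hypothesis Phi_hom : forall z a b, eW a b -> e (Phi z a) (Phi z b).
Hypothesis Phi_sep :
  forall a b, a != b -> ~~ eW a b -> exists z, ~~ e (Phi z a) (Phi z b).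

(* Copy i of V is relabelled by [relabel i]: the image of a : W under the i-th
   homomorphism gets the even label of a, every other vertex an odd label
   depending on i.  Copies 0 and 1 give each such vertex different odd labels,
   so only even labels survive the intersection; copies i >= #|W| merely repeat
   earlier homomorphisms. *)
Let k := #|W|.+2.

Definition copy_index (i : 'I_k) (a : W) : W := nth a (enum W) (i %% #|W|).

Lemma copy_indexE i a b : copy_index i a = copy_index i b.
Proof.
apply: set_nth_default; rewrite -cardE ltn_pmod //.
by apply/card_gt0P; exists a.
Qed.

Definition copy_map (i : 'I_k) (a : W) : V := Phi (copy_index i a) a.

Lemma copy_map_inj i : injective (copy_map i).
Proof. by move=> a b; rewrite /copy_map (copy_indexE i a b); apply: Phi_inj. Qed.

Lemma copy_map_hom i a b : eW a b -> e (copy_map i a) (copy_map i b).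
Proof. by rewrite /copy_map (copy_indexE i a b); apply: Phi_hom. Qed.

Lemma copy_map_onto z : exists i, copy_map i =1 Phi z.
Proof.
have lt_z_k : enum_rank z < k := leqW (leqW (ltn_ord _)).
exists (Ordinal lt_z_k) => a; rewrite /copy_map /copy_index /= modn_small //.
by rewrite (set_nth_default z) ?nth_enum_rank // -cardE.
Qed.

Definition label (a : W) : nat := (enum_rank a).*2.

Definition relabel (i : 'I_k) (v : V) : nat :=
  if [pick a | copy_map i a == v] is Some a then label a
  else (i + k * enum_rank v).*2.+1.

Lemma label_inj : injective label.
Proof. by move=> a b /double_inj /val_inj /enum_rank_inj. Qed.

Lemma relabel_copy i a : relabel i (copy_map i a) = label a.
Proof.
rewrite /relabel; case: pickP => [a' /eqP /copy_map_inj -> //|].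
by move=> /(_ a); rewrite eqxx.
Qed.

Lemma relabel_label i v a : relabel i v = label a -> v = copy_map i a.
Proof.
rewrite /relabel; case: pickP => [a' /eqP <- /label_inj -> //|_].
by move=> /(congr1 odd); rewrite /label /= !odd_double.
Qed.

Lemma relabel_inj i : injective (relabel i).
Proof.
move=> u v; rewrite {1}/relabel; case: pickP => [a /eqP <- |_].
  by move=> /esym /relabel_label ->.
rewrite /relabel; case: pickP => [b _ | _].
  by move=> /(congr1 odd); rewrite /label /= !odd_double.
move=> /eq_add_S /double_inj /eqP; rewrite eqn_add2l eqn_mul2l /=.
by move=> /eqP /val_inj /enum_rank_inj.
Qed.

Lemma relabel_common x :
  (forall i, exists v, relabel i v = x) -> exists a, label a = x.
Proof.
move=> hx; have [v0 hv0] := hx (Ordinal (isT : 0 < k)).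
have [v1 hv1] := hx (Ordinal (isT : 1 < k)).
move: hv0; rewrite /relabel; case: pickP => [a _ <-|_ hx0]; first by exists a.
move: hv1; rewrite /relabel; case: pickP => [a _ hx1|_ hx1].
  by move: hx0; rewrite -hx1 => /(congr1 odd); rewrite /label /= !odd_double.
move: hx1; rewrite -hx0 /= => /eq_add_S /double_inj /(congr1 (modn^~ k)).
by rewrite add0n !(mulnC k) addnC modnMDl modnMl modn_small.
Qed.

Lemma inter_to_of_embeddings : inter_to e eW.
Proof.
exists k; split => //; exists relabel; split; first exact: relabel_inj.
exists label; split; first exact: label_inj.
  move=> x; split; first exact: relabel_common.
  by case=> a <- i; exists (copy_map i a); rewrite relabel_copy.
move=> a b; split => [hab|hab i]; last first.
  by exists (copy_map i a), (copy_map i b); rewrite !relabel_copy copy_map_hom.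
have edge_copy i : e (copy_map i a) (copy_map i b).
  by have [v [v' [/relabel_label -> /relabel_label -> ]]] := hab i.
apply/negPn/negP => nab; have a_neq_b : a != b.
  by apply: contraTneq (edge_copy (Ordinal (isT : 0 < k))) => ->; rewrite e_irr.
have [z ne_z] := Phi_sep a_neq_b nab; have [i hi] := copy_map_onto z.
by move: (edge_copy i); rewrite !hi (negbTE ne_z).
Qed.

End IntersectionOfEmbeddings.

Section CliqueExtension.
Variables (V W : finType) (e : rel V) (eW : rel W) (A T : {set V}) (x0 : V).

Definition anchored_embedding (D : {set W}) (psi : W -> V) : Prop :=
  [/\ {in D &, injective psi}, {in D, forall a, psi a \in T},
      {in D &, forall a b, eW a b -> e (psi a) (psi b)} &
      {in D & ~: D, forall a b, eW a b -> psi a \in A}].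

Definition extend (D : {set W}) (psi : W -> V) (a : W) : V :=
  if a \in D then psi a else nth x0 (enum (A :\: T)) (index a (enum (~: D))).

Variables (D : {set W}) (psi : W -> V).
Hypothesis compl_small : #|~: D| <= #|A :\: T|.

Lemma extend_in a : a \in D -> extend D psi a = psi a.
Proof. by rewrite /extend => ->. Qed.

Lemma index_compl_lt a : a \notin D -> index a (enum (~: D)) < size (enum (A :\: T)).
Proof.
by move=> aD; rewrite -cardE (leq_trans _ compl_small) // cardE index_mem mem_enum inE.
Qed.

Lemma extend_out a : a \notin D -> extend D psi a \in A :\: T.
Proof. by move=> aD; rewrite /extend (negbTE aD) -mem_enum mem_nth ?index_compl_lt. Qed.

Hypothesis psi_anchored : anchored_embedding D psi.

Lemma extend_in_out a b : a \in D -> b \notin D -> extend D psi a != extend D psi b.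
Proof.
case: psi_anchored => _ psiT _ _ aD bD; apply: contraTneq (extend_out bD) => <-.
by rewrite extend_in // inE psiT ?andbF.
Qed.

Lemma extend_inj : injective (extend D psi).
Proof.
case: psi_anchored => psi_inj _ _ _ a b.
case: (boolP (a \in D)) => aD; case: (boolP (b \in D)) => bD.
- by rewrite !extend_in //; apply: psi_inj.
- by move/eqP; rewrite (negbTE (extend_in_out aD bD)).
- by move/esym/eqP; rewrite (negbTE (extend_in_out bD aD)).
rewrite /extend (negbTE aD) (negbTE bD) => /eqP.
rewrite (nth_uniq x0 (index_compl_lt aD) (index_compl_lt bD) (enum_uniq _)).
by move/eqP; apply: (index_inj a); rewrite mem_enum inE.
Qed.

Hypothesis A_clique : {in A &, forall x y, x != y -> e x y}.
Hypothesis eW_sym : symmetric eW.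
Hypothesis eW_irr : irreflexive eW.

Lemma extend_hom : {homo extend D psi : a b / eW a b >-> e a b}.
Proof.
case: psi_anchored => _ _ psi_hom psi_bd a b ab.
have outA x : x \notin D -> extend D psi x \in A.
  by move/extend_out; rewrite inE => /andP[].
have bdA x y : x \in D -> y \notin D -> eW x y -> extend D psi x \in A.
  by move=> xD yD xy; rewrite extend_in // (psi_bd x y) ?inE.
have a_neq_b : extend D psi a != extend D psi b.
  by apply: contraTneq ab => /extend_inj ->; rewrite eW_irr.
case: (boolP (a \in D)) => aD; case: (boolP (b \in D)) => bD.
- by rewrite !extend_in //; apply: psi_hom.
- by apply: A_clique; rewrite ?(bdA a b) ?outA.
- by apply: A_clique; rewrite ?(bdA b a) 1?eW_sym ?outA.
- by apply: A_clique; rewrite ?outA.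
Qed.

End CliqueExtension.

Section SpiderForest.
Variable t : nat.
Local Notation W := (tS_vertex t).

Lemma tS_sym : symmetric (tS_rel t).
Proof.
move=> [ca [[ja ma]|]] [cb [[jb mb]|]]; rewrite /tS_rel //= eq_sym //.
by rewrite (eq_sym ja) orbC.
Qed.

Lemma tS_irr : irreflexive (tS_rel t).
Proof. by move=> [c [[j m]|]]; rewrite /tS_rel //= !eqxx /=; lia. Qed.

Definition tS_dist (a : W) : nat := if a.2 is Some (_, m) then m.+1 else 0.

Definition tS_ray (c : 'I_t) (j : 'I_3) : {set W} :=
  [set a | (a.1 == c) && (if a.2 is Some (j', _) then j' == j else true)].

Lemma tS_dist_inj c j : {in tS_ray c j &, injective tS_dist}.
Proof.
move=> [ca [[ja ma]|]] [cb [[jb mb]|]]; rewrite !inE /tS_dist //=.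
by move=> /andP[/eqP-> /eqP->] /andP[/eqP-> /eqP->] [/val_inj ->].
by move=> /andP[/eqP-> _] /andP[/eqP-> _].
Qed.

Lemma tS_rel_ray c j : {in tS_ray c j &, forall a b,
  tS_rel t a b = (tS_dist b == (tS_dist a).+1) || (tS_dist a == (tS_dist b).+1)}.
Proof.
move=> [ca [[ja ma]|]] [cb [[jb mb]|]]; rewrite !inE /tS_rel /tS_dist //=;
  move=> /andP[/eqP-> ha] /andP[/eqP-> hb]; rewrite eqxx /= ?eqSS ?orbF //.
by rewrite (eqP ha) (eqP hb) eqxx; congr orb; apply: eq_sym.
Qed.

Lemma tS_rel_off_ray c j a b :
  a \in tS_ray c j -> b \notin tS_ray c j -> tS_rel t a b -> tS_dist a = 0.
Proof.
case: a => [ca [[ja ma]|]] //; rewrite inE /= => /andP[/eqP-> /eqP->].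
case: b => [cb [[jb mb]|]]; rewrite inE /tS_rel /= => nb /andP[/eqP cb_eq].
  by rewrite -cb_eq eqxx /= in nb; case/andP => /eqP jb_eq; rewrite -jb_eq eqxx in nb.
by rewrite -cb_eq eqxx in nb.
Qed.

End SpiderForest.

Section PathSegment.
Variables (t : nat) (V : finType) (e : rel V) (A T : {set V}) (x0 : V) (p : seq V).
Hypothesis e_sym : symmetric e.
Hypothesis p_uniq : uniq p.
Hypothesis p_path : sorted e p.
Hypothesis p_T : {subset p <= T}.
Hypothesis p_head : head x0 p \in A.
Hypothesis p_last : last x0 p \in A.

Definition segment (c : 'I_t) (j : 'I_3) (m0 : nat) : {set tS_vertex t} :=
  tS_ray c j :&: [set a | m0 <= tS_dist a < m0 + size p].

Definition segment_map (m0 : nat) (a : tS_vertex t) : V := nth x0 p (tS_dist a - m0).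

Lemma segment_anchored c j m0 :
  anchored_embedding e (tS_rel t) A T (segment c j m0) (segment_map m0).
Proof.
have inP a : a \in segment c j m0 ->
    [/\ a \in tS_ray c j, m0 <= tS_dist a & tS_dist a - m0 < size p].
  by rewrite in_setI in_set => /andP[-> /andP[lo hi]]; split => //; lia.
split.
- move=> a b /inP[ra lo hi] /inP[rb lo' hi'] /eqP.
  rewrite /segment_map nth_uniq // => /eqP ab; apply: (tS_dist_inj ra rb); lia.
- by move=> a /inP[_ _ hi]; apply/p_T/mem_nth.
- move=> a b /inP[ra lo hi] /inP[rb lo' hi']; rewrite (tS_rel_ray ra rb) /segment_map.
  have /(sortedP x0) step := p_path.
  case/orP => /eqP ab; [have -> : tS_dist b - m0 = (tS_dist a - m0).+1 by lia
                       |rewrite e_sym; have -> : tS_dist a - m0 = (tS_dist b - m0).+1 by lia];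
    by apply: step; lia.
move=> a b /inP[ra lo hi] nb ab; rewrite /segment_map.
have [rb|rb] := boolP (b \in tS_ray c j); last first.
  by rewrite (tS_rel_off_ray ra rb ab) sub0n nth0.
rewrite in_setC in_setI rb in_set /= in nb; rewrite (tS_rel_ray ra rb) in ab.
have [->|->] : tS_dist a - m0 = 0 \/ tS_dist a - m0 = (size p).-1 by lia.
  by rewrite nth0.
by rewrite nth_last.
Qed.

End PathSegment.

Section Star.
Variables (t : nat) (V : finType) (e : rel V) (A T : {set V}) (w : V).
Variable q : 'I_3 -> seq V.
Hypothesis e_sym : symmetric e.
Hypothesis q_path : forall j, path e w (q j).
Hypothesis q_uniq : forall j, uniq (w :: q j).
Hypothesis q_disjoint : forall j j', j != j' -> [disjoint q j & q j'].
Hypothesis q_T : forall j, {subset w :: q j <= T}.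
Hypothesis q_last : forall j, last w (q j) \in A.
Hypothesis w_notA : w \notin A.

Lemma size_star_leg_gt0 j : 0 < size (q j).
Proof. by move: (q_last j) w_notA; case: (q j) => //= ->. Qed.

Definition star (c : 'I_t) : {set tS_vertex t} :=
  [set a : tS_vertex t | (a.1 == c) && (if a.2 is Some (j, m) then m < size (q j) else true)].

Definition star_map (a : tS_vertex t) : V := if a.2 is Some (j, m) then nth w (q j) m else w.

Lemma star_anchored c : anchored_embedding e (tS_rel t) A T (star c) star_map.
Proof.
split.
- move=> [ca [[ja ma]|]] [cb [[jb mb]|]]; rewrite !inE /star_map /=;
    move=> /andP[/eqP-> ha] /andP[/eqP-> hb] //.
  + move=> ab; have [jab|jab] := eqVneq ja jb.
      subst jb; have /andP[_ uq] := q_uniq ja.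
      by move/eqP: ab; rewrite nth_uniq // => /eqP /val_inj ->.
    by have := disjointFr (q_disjoint jab) (mem_nth w ha); rewrite ab (mem_nth w hb).
  + by move=> ab; have /andP[] := q_uniq ja; rewrite -ab mem_nth.
  + by move=> ab; have /andP[] := q_uniq jb; rewrite ab mem_nth.
- move=> [ca [[ja ma]|]]; rewrite inE /star_map /= => /andP[_ ha].
    by apply: (@q_T ja); rewrite inE mem_nth ?orbT.
  by apply: (@q_T ord0); rewrite inE eqxx.
- move=> [ca [[ja ma]|]] [cb [[jb mb]|]]; rewrite /tS_rel !inE /star_map /=;
    move=> /andP[_ ha] /andP[_ hb] /andP[_ ab] //.
  + case/andP: ab => /eqP jab /orP[] /eqP mab; subst jb.
      by have := pathP w (q_path ja) _ hb; rewrite -mab.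
    by have := pathP w (q_path ja) _ ha; rewrite -mab e_sym.
  + by have := pathP w (q_path ja) _ ha; rewrite (eqP ab) e_sym.
  + by have := pathP w (q_path jb) _ hb; rewrite (eqP ab).
move=> [ca [[ja ma]|]] [cb [[jb mb]|]]; rewrite /tS_rel !inE /star_map /=;
  move=> /andP[/eqP-> ha] + /andP[/eqP cab ab]; rewrite -cab eqxx //=.
- case/andP: ab => /eqP <- mab hb.
  have -> : (ma : nat) = (size (q ja)).-1 by lia.
  by rewrite nth_last.
- by move=> hb; move: (size_star_leg_gt0 jb) ab hb; lia.
Qed.

End Star.

Section CliqueWithTripod.
Variables (t : nat) (V : finType) (e : rel V) (A T : {set V}) (w : V) (q1 q2 q3 : seq V).
Local Notation W := (tS_vertex t).
Hypothesis e_sym : symmetric e.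
Hypothesis e_irr : irreflexive e.
Hypothesis A_big : 3 * t ^ 2 + t + 1 <= #|A|.
Hypothesis A_clique : {in A &, forall x y, x != y -> e x y}.
Hypothesis w_notA : w \notin A.
Hypothesis P1 : is_path_from e w q1.
Hypothesis P2 : is_path_from e w q2.
Hypothesis P3 : is_path_from e w q3.
Hypothesis L1 : last w q1 \in A.
Hypothesis L2 : last w q2 \in A.
Hypothesis L3 : last w q3 \in A.
Hypothesis T_def :
  T = [set x | x \in w :: q1] :|: [set x | x \in w :: q2] :|: [set x | x \in w :: q3].
Hypothesis D12 : [disjoint q1 & q2].
Hypothesis D13 : [disjoint q1 & q3].
Hypothesis D23 : [disjoint q2 & q3].
Hypothesis AT_card : #|A :&: T| = 3.
Hypothesis AT_def : A :&: T = [set last w q1; last w q2; last w q3].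
Hypothesis AT_anti : {in A :\: T & T :\: A, forall x y, ~~ e x y}.

Definition leg (j : 'I_3) : seq V := nth [::] [:: q1; q2; q3] j.

Lemma legP (P : seq V -> Prop) : P q1 -> P q2 -> P q3 -> forall j, P (leg j).
Proof. by move=> P_1 P_2 P_3 [[|[|[|?]]] ?]. Qed.

Lemma leg_path j : path e w (leg j).
Proof. by apply: (legP (P := path e w)); [case: P1 | case: P2 | case: P3]. Qed.

Lemma leg_uniq j : uniq (w :: leg j).
Proof. by apply: (legP (P := fun q => uniq (w :: q))); [case: P1 | case: P2 | case: P3]. Qed.

Lemma leg_disjoint j j' : j != j' -> [disjoint leg j & leg j'].
Proof.
by case: j j' => [[|[|[|?]]] ?] [[|[|[|?]]] ?] //= _; rewrite // disjoint_sym.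
Qed.

Lemma leg_T j : {subset w :: leg j <= T}.
Proof.
by apply: (legP (P := fun q => {subset w :: q <= T})) => x xq;
  rewrite T_def !in_setU !in_set xq ?orbT.
Qed.

Lemma leg_last j : last w (leg j) \in A.
Proof. exact: (legP (P := fun q => last w q \in A)). Qed.

Lemma size_leg_gt0 j : 0 < size (leg j).
Proof. exact: size_star_leg_gt0 leg_last w_notA j. Qed.

Definition glued : seq V := rev q2 ++ w :: q1.

Lemma size_glued : 2 < size glued.
Proof.
have := size_leg_gt0 (Ordinal (isT : 1 < 3)); have := size_leg_gt0 ord0.
by rewrite /leg /glued size_cat size_rev /=; lia.
Qed.

Lemma glued_uniq : uniq glued.
Proof.
case: P1 P2 => _ + [_]; rewrite !cons_uniq => /andP[wq1 uq1] /andP[wq2 uq2].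
rewrite /glued cat_uniq rev_uniq uq2 /= wq1 uq1 /=.
rewrite mem_rev (negbTE wq2) andbT /=.
by apply/hasPn => x xq1; rewrite mem_rev (disjointFr D12 xq1).
Qed.

Lemma glued_sorted : sorted e glued.
Proof.
case: P1 P2 => p1 _ [p2 _].
rewrite /glued sorted_cat_cons -rev_cons rev_sorted /= p1 andbT.
by rewrite (eq_path (e' := e)) // => x y; apply: e_sym.
Qed.

Lemma glued_T : {subset glued <= T}.
Proof.
move=> x; rewrite /glued mem_cat mem_rev => /orP[xq2|xq1].
  by apply: (@leg_T (Ordinal (isT : 1 < 3))); rewrite inE xq2 orbT.
exact: (@leg_T ord0).
Qed.

Lemma glued_head : head w glued = last w q2.
Proof.
have := size_leg_gt0 (Ordinal (isT : 1 < 3)); rewrite /= => q2_pos.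
by rewrite /glued -nth0 nth_cat size_rev q2_pos nth_rev // subn1 nth_last.
Qed.

Lemma glued_last : last w glued = last w q1.
Proof. by rewrite /glued last_cat. Qed.

Lemma glued_disjoint_q3 x : x \in glued -> x \notin q3.
Proof.
case: P3 => _ /andP[wq3 _].
rewrite /glued mem_cat mem_rev inE => /or3P[xq2|/eqP->|xq1] //.
  by rewrite (disjointFr D23 xq2).
by rewrite (disjointFr D13 xq1).
Qed.

Lemma glued_second_notA : nth w glued 1 \notin A.
Proof.
have x_glued : nth w glued 1 \in glued by rewrite mem_nth // ltnW // size_glued.
apply/negP => xA; have : nth w glued 1 \in A :&: T by rewrite inE xA glued_T.
have [n size_glued_eq] : exists n, size glued = n.+3.
  by move: size_glued; case: (size glued) => [|[|[|n]]] // _; exists n.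
rewrite AT_def !inE => /orP[/orP[]|] /eqP.
- by rewrite -glued_last -nth_last => /eqP; rewrite nth_uniq ?glued_uniq ?size_glued_eq.
- by rewrite -glued_head -nth0 => /eqP; rewrite nth_uniq ?glued_uniq ?size_glued_eq.
move=> x_y3; have := mem_last w q3.
rewrite -x_y3 inE (negbTE (glued_disjoint_q3 x_glued)) orbF => /eqP x_w.
by move: w_notA; rewrite -x_w xA.
Qed.

(* The leg vertex (c, (j, m)) is at distance m + 1 from its centre, so its
   segment starts one step closer to the centre and the vertex itself lands on
   the second vertex of [glued], which is not in A. *)
Definition piece (z : W) : {set W} :=
  if z.2 is Some (j, m) then segment glued z.1 j m else star leg z.1.

Definition piece_map (z : W) : W -> V :=
  if z.2 is Some (_, m) then segment_map w glued m else star_map w leg.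

Lemma piece_anchored z : anchored_embedding e (tS_rel t) A T (piece z) (piece_map z).
Proof.
case: z => c [[j m]|] /=.
  apply: segment_anchored e_sym glued_uniq glued_sorted glued_T _ _ c j m.
    by rewrite glued_head.
  by rewrite glued_last.
exact: star_anchored e_sym leg_path leg_uniq leg_disjoint leg_T leg_last w_notA c.
Qed.

Lemma piece_self z : z \in piece z.
Proof.
case: z => c [[j m]|]; rewrite /piece /=.
  by rewrite in_setI !inE /tS_dist /= !eqxx leqnSn /=; have := size_glued; lia.
by rewrite inE /= eqxx.
Qed.

Lemma piece_map_self z : piece_map z z \in T :\: A.
Proof.
have [_ piece_T _ _] := piece_anchored z; rewrite inE piece_T ?piece_self // andbT.
case: z {piece_T} => c [[j m]|] //; rewrite /piece_map /segment_map /= subSnn.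
exact: glued_second_notA.
Qed.

Lemma piece_card z : 1 < #|piece z|.
Proof.
apply/card_gt1P; exists z; case: z => c [[j [m lt_m_t]]|].
- case: m lt_m_t => [|m] lt_m_t.
    exists (c, None); split; rewrite ?piece_self //; last by apply/eqP.
    by rewrite /piece in_setI !inE /tS_dist /= eqxx /=; have := size_glued; lia.
  exists (c, Some (j, Ordinal (ltnW lt_m_t))); split; rewrite ?piece_self //.
    by rewrite /piece in_setI !inE /tS_dist /= !eqxx /=; have := size_glued; lia.
  by apply/eqP => -[] /eqP; lia.
have t_pos : 0 < t by apply: leq_ltn_trans (ltn_ord c).
exists (c, Some (ord0, Ordinal t_pos)); split; rewrite ?piece_self //; last by apply/eqP.
by rewrite /piece inE /= eqxx /=; apply: size_leg_gt0.
Qed.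

Lemma piece_sep a b : a != b -> ~~ tS_rel t a b -> (b \notin piece a) || (a \notin piece b).
Proof.
wlog le_ab : a b / tS_dist a <= tS_dist b.
  move=> hwlog ab nab; have [le|/ltnW le] := leqP (tS_dist a) (tS_dist b).
    exact: hwlog.
  by rewrite orbC hwlog // 1?eq_sym // tS_sym.
move=> ab nab; apply/orP; right; apply: contra nab.
case: b ab le_ab => cb [[jb mb]|] ab le_ab.
  have rb : (cb, Some (jb, mb)) \in tS_ray cb jb by rewrite inE /= !eqxx.
  have db : tS_dist (cb, Some (jb, mb)) = mb.+1 by [].
  rewrite /piece in_setI in_set => /andP[ra /andP[lo _]].
  rewrite (tS_rel_ray ra rb) db; rewrite db in le_ab.
  have [eq_d|ne_d] := eqVneq (tS_dist a) mb.+1.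
    by rewrite -db in eq_d; rewrite (tS_dist_inj ra rb eq_d) eqxx in ab.
  by apply/orP; left; apply/eqP; move: lo le_ab ne_d; lia.
rewrite /piece inE /= => /andP[/eqP a_copy _].
by case: a ab le_ab a_copy => ca [[ja ma]|] //= ab _ a_copy; rewrite a_copy eqxx in ab.
Qed.

Lemma piece_compl_card z : #|~: piece z| <= #|A :\: T|.
Proof.
have card_W : #|W| = 3 * t ^ 2 + t.
  by rewrite card_prod card_option card_prod !card_ord; lia.
have := cardsC (piece z); rewrite cardsD AT_card card_W; move: (piece_card z) A_big; lia.
Qed.

Definition spider_embedding (z : W) : W -> V := extend A T w (piece z) (piece_map z).

Lemma inter_to_spider_forest : inter_to e (tS_rel t).
Proof.
apply: (@inter_to_of_embeddings _ _ _ _ spider_embedding e_irr) => [z|z|a b ab nab].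
- exact: extend_inj (piece_compl_card z) (piece_anchored z).
- exact: extend_hom (piece_compl_card z) (piece_anchored z) A_clique (@tS_sym t) (@tS_irr t).
have self z : spider_embedding z z \in T :\: A.
  by rewrite /spider_embedding extend_in ?piece_self ?piece_map_self.
have out z x : x \notin piece z -> spider_embedding z x \in A :\: T.
  exact: (extend_out w (piece_map z) (piece_compl_card z)).
case/orP: (piece_sep ab nab) => [/(out a) ba | /(out b) ab']; [exists a | exists b].
  by rewrite e_sym AT_anti ?self.
by rewrite AT_anti ?self.
Qed.

End CliqueWithTripod.

Theorem mainTheorem9 (t : nat) (V : finType) (e : rel V) (A T : {set V})
  (w : V) (q1 q2 q3 : seq V) :
  simple_graph e ->
  A :|: T = setT ->
  3 * t ^ 2 + t + 1 <= #|A| ->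
  (forall x y, x \in A -> y \in A -> x != y -> e x y) ->
  w \notin A ->
  is_path_from e w q1 -> is_path_from e w q2 -> is_path_from e w q3 ->
  last w q1 \in A -> last w q2 \in A -> last w q3 \in A ->
  T = [set x | x \in w :: q1] :|: [set x | x \in w :: q2] :|: [set x | x \in w :: q3] ->
  [disjoint q1 & q2] -> [disjoint q1 & q3] -> [disjoint q2 & q3] ->
  #|[set x | e w x]| = 3 ->
  #|A :&: T| = 3 ->
  A :&: T = [set last w q1; last w q2; last w q3] ->
  induces_chordless_cycle e ([set x | x \in w :: q1] :|: [set x | x \in w :: q2]) ->
  (forall x y, x \in A :\: T -> y \in T :\: A -> ~~ e x y) ->
  inter_to e (tS_rel t).
Proof.
move=> [e_sym e_irr] _ A_big A_clique w_notA P1 P2 P3 L1 L2 L3 T_def D12 D13 D23 _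
  AT_card AT_def _ AT_anti.
exact: (inter_to_spider_forest e_sym e_irr A_big A_clique w_notA P1 P2 P3 L1 L2 L3
  T_def D12 D13 D23 AT_card AT_def AT_anti).
Qed.
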